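(* Let $H=(V,E)$ be a contextuality scenario with $|E|=m$ and $\max_{e\in E}|e|=d$. Then there is a rule $r$ on the bipartite Bell scenario $B_{2,m,d}$ (two players, each with $m$ measurements having $d$ outcomes each) such that $H$ is a conditional contextuality scenario of the game $(B_{2,m,d})_r$; i.e. $H$ has a $2$-partite conditional interpretation as a game on $B_{2,m,d}$.
   Context: A contextuality scenario is a hypergraph $H=(V,E)$ (finite $V$, $E$ a set of subsets of $V$) with $V=\bigcup_{e\in E}e$. A probabilistic model on $H$ is a function $p:V\to[0,1]$ with $\sum_{v\in e}p(v)=1$ for all $e\in E$; $\mathcal{G}(H)$ denotes the set of such models. For $W\subseteq V$, the induced sub-hypergraph is $H_W=(W,\{e\cap W:e\in E\})$. Conditional contextuality: given hypergraphs $H=(V,E)$ and $H'=(V',E')$, $H'$ is a conditional contextuality scenario of $H$ if there is an injection $\phi:V'\to V$ such that (i) for all $p\in\mathcal{G}(H)$, $p\circ\phi\in\mathcal{G}(H')$, and (ii) for all $p'\in\mathcal{G}(H')$ there exists $p\in\mathcal{G}(H)$ with $p\circ\phi=p'$. Foulis–Randall product: for hypergraphs $H_A=(V_A,E_A)$, $H_B=(V_B,E_B)$, let $E_{A\to B}=\{\bigcup_{a\in e_A}(\{a\}\times f(a)) : e_A\in E_A,\ f:e_A\to E_B\}$ and $E_{A\gets B}=\{\bigcup_{b\in e_B}(g(b)\times\{b\}) : e_B\in E_B,\ g:e_B\to E_A\}$; then $H_A\otimes H_B=(V_A\times V_B,\ E_{A\to B}\cup E_{A\gets B})$. Bipartite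 game: let $B_1=(V_1,E_1)$, $B_2=(V_2,E_2)$ be hypergraphs whose edges are pairwise disjoint and cover the vertex set, and $H=(V,E)=B_1\otimes B_2$. Edges of the form $e_1\times e_2$ with $e_i\in E_i$ are called questions; $Q_E$ is the set of questions. A rule is a function $r:Q_E\to\mathcal{P}(V)$ with $r(e)\subseteq e$ for all $e\in Q_E$. With $W_r=\bigcup_{e\in Q_E}r(e)$, the game on $H$ under rule $r$ is $H_r=H_{W_r}=(W_r,\{e\cap W_r:e\in E\})$. $B_{2,m,d}$ denotes $B\otimes B$ where $B$ is the hypergraph with vertex set $\{x|a: x\in\{1,\dots,m\},\ a\in\{1,\dots,d\}\}$ and the $m$ disjoint edges $\{x|a: a\in\{1,\dots,d\}\}$, $x=1,\dots,m$. A game on $B_{2,m,d}$ is $(B_{2,m,d})_r$ for some rule $r$. *)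

From mathcomp Require Import all_boot all_order all_algebra.
From mathcomp Require Import reals.
Set Implicit Arguments. Unset Strict Implicit. Unset Printing Implicit Defensive.
Import Order.TTheory GRing.Theory Num.Theory.
Local Open Scope ring_scope.

Record hypergraph (T : finType) := Hypergraph {
  hverts : {set T};
  hedges : {set {set T}} }.

(* Probabilistic models: p : T -> R, only its values on the vertex set matter. *)
Definition prob_model (R : realType) (T : finType) (H : hypergraph T) (p : T -> R) : Prop :=
  (forall v, v \in hverts H -> 0 <= p v <= 1) /\
  (forall e, e \in hedges H -> \sum_(v in e) p v = 1).

Definition induced (T : finType) (H : hypergraph T) (W : {set T}) : hypergraph T :=
  Hypergraph W [set e :&: W | e in hedges H].

Definition cond_scenario (R : realType) (T' T : finType)
    (H' : hypergraph T') (H : hypergraph T) : Prop :=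
  exists phi : T' -> T,
    [/\ {in hverts H' &, injective phi},
        {in hverts H', forall v, phi v \in hverts H},
        (forall p : T -> R, prob_model H p -> prob_model H' (p \o phi)) &
        (forall p' : T' -> R, prob_model H' p' ->
           exists p : T -> R, prob_model H p /\ {in hverts H', p \o phi =1 p'})].

Definition edges_AtoB (TA TB : finType) (HA : hypergraph TA) (HB : hypergraph TB)
  : {set {set (TA * TB)%type}} :=
  [set S : {set (TA * TB)%type} | [exists eA in hedges HA, exists f : {ffun TA -> {set TB}},
      [forall a in eA, f a \in hedges HB] &&
      (S == [set v : TA * TB | (v.1 \in eA) && (v.2 \in f v.1)])]].

Definition edges_AfromB (TA TB : finType) (HA : hypergraph TA) (HB : hypergraph TB)
  : {set {set (TA * TB)%type}} :=
  [set S : {set (TA * TB)%type} | [exists eB in hedges HB, exists g : {ffun TB -> {set TA}},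
      [forall b in eB, g b \in hedges HA] &&
      (S == [set v : TA * TB | (v.2 \in eB) && (v.1 \in g v.2)])]].

Definition fr_prod (TA TB : finType) (HA : hypergraph TA) (HB : hypergraph TB)
  : hypergraph (TA * TB)%type :=
  Hypergraph (setX (hverts HA) (hverts HB)) (edges_AtoB HA HB :|: edges_AfromB HA HB).

Definition questions (TA TB : finType) (HA : hypergraph TA) (HB : hypergraph TB)
  : {set {set (TA * TB)%type}} :=
  [set setX e1 e2 | e1 in hedges HA, e2 in hedges HB].

Definition is_rule (TA TB : finType) (HA : hypergraph TA) (HB : hypergraph TB)
  (r : {set (TA * TB)%type} -> {set (TA * TB)%type}) : Prop :=
  forall q, q \in questions HA HB -> r q \subset q.

Definition rule_support (TA TB : finType) (HA : hypergraph TA) (HB : hypergraph TB)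
  (r : {set (TA * TB)%type} -> {set (TA * TB)%type}) : {set (TA * TB)%type} :=
  \bigcup_(q in questions HA HB) r q.

Definition game (TA TB : finType) (HA : hypergraph TA) (HB : hypergraph TB)
  (r : {set (TA * TB)%type} -> {set (TA * TB)%type}) : hypergraph (TA * TB)%type :=
  induced (fr_prod HA HB) (rule_support HA HB r).

(* The single-party scenario B: vertices x|a ~ (x,a), edges {x|a : a} *)
Definition Bscen (m d : nat) : hypergraph ('I_m * 'I_d)%type :=
  Hypergraph [set: 'I_m * 'I_d] [set [set (x, a) | a : 'I_d] | x : 'I_m].

Definition B2 (m d : nat) := fr_prod (Bscen m d) (Bscen m d).

(* Enumerate the edges of H as measurements x and label the vertices of each edge
   injectively by outcomes a < d.  The rule keeps an answer pair ((x,a),(y,b)) only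
   when both outcomes label vertices u, w of H and u = w as soon as u lies in edge y
   or w lies in edge x.  A vertex u is embedded as the pair in which both players
   measure a fixed edge containing u and both answer u.
   A model of the game restricts to a model of H: the no-signalling constraints of
   the Foulis-Randall product show that the weight of this diagonal pair does not
   depend on the chosen edge, so summing over an edge e of H gives the weight of the
   measurement pair (e, e), which is 1.  Conversely a model p of H extends to the
   game: answers are perfectly correlated on shared vertices, and two vertices u, w
   outside each other's edges x, y get p(u) p(w) / p(e_x \ e_y); as both edges have
   weight 1, p(e_x \ e_y) = p(e_y \ e_x), which makes both marginals equal to p. *)

From mathcomp Require Import all_boot all_order all_algebra.
From mathcomp Require Import reals.
From mathcomp Require Import lra.
Set Implicit Arguments. Unset Strict Implicit. Unset Printing Implicit Defensive.
Import Order.TTheory GRing.Theory Num.Theory.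
Local Open Scope ring_scope.

Lemma edges_AfromB_swap (TA TB : finType) (HA : hypergraph TA) (HB : hypergraph TB)
    (S : {set TA * TB}) :
  (S \in edges_AfromB HA HB) = ([set v | (v.2, v.1) \in S] \in edges_AtoB HB HA).
Proof.
rewrite !inE; apply: eq_existsb => e; congr (_ && _); apply: eq_existsb => g.
congr (_ && _); apply/eqP/eqP => [-> | eqS]; apply/setP => v; rewrite !inE //.
have := congr1 (fun X : {set TB * TA} => (v.2, v.1) \in X) eqS.
by rewrite !inE /= -surjective_pairing.
Qed.

Lemma sum_choice_constant (I : finType) (J : Type) (R : zmodType) (G : I -> J -> R) c :
  (forall g : I -> J, \sum_i G i (g i) = c) -> forall i y y', G i y = G i y'.
Proof.
move=> G_c i y y'; pose g z j := if j == i then z else y.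
have sum_g z : \sum_j G j (g z j) = G i z + \sum_(j | j != i) G j y.
  by rewrite (bigD1 i) //= /g eqxx; congr (_ + _); apply: eq_bigr => j /negbTE ->.
by apply: (addIr (\sum_(j | j != i) G j y)); rewrite -!sum_g !G_c.
Qed.

Section BellScenario.
Variables m d : nat.
Local Notation T := ('I_m * 'I_d)%type.
Local Notation B := (Bscen m d).

Definition measurement (x : 'I_m) : {set T} := [set v | v.1 == x].

Lemma Bscen_edges : hedges B = [set measurement x | x : 'I_m].
Proof.
apply: eq_imset => x; apply/setP => -[y a]; rewrite inE /=.
by apply/imsetP/eqP => [[b _ [-> _]] // | ->]; exists a.
Qed.

Lemma sum_measurement (R : nmodType) x (F : T -> R) :
  \sum_(v | v.1 == x) F v = \sum_a F (x, a).
Proof.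
have -> : \sum_a F (x, a) = \sum_(y | y == x) \sum_a F (y, a) by rewrite big_pred1_eq.
rewrite pair_big_dep /=.
by apply: eq_big => [v | [? ?] _]; rewrite ?andbT.
Qed.

Definition AtoB_edge (x : 'I_m) (g : 'I_d -> 'I_m) : {set T * T} :=
  [set v | (v.1.1 == x) && (v.2.1 == g v.1.2)].

Definition AfromB_edge (y : 'I_m) (g : 'I_d -> 'I_m) : {set T * T} :=
  [set v | (v.2.1 == y) && (v.1.1 == g v.2.2)].

Lemma edges_AtoBP S : S \in edges_AtoB B B <-> exists x g, S = AtoB_edge x g.
Proof.
rewrite inE Bscen_edges; split.
  case/existsP=> _ /andP [/imsetP [x _ ->] /existsP [f /andP [/forallP f_edge /eqP ->]]].
  have /fin_all_exists [g fg] : forall a, exists y, f (x, a) = measurement y.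
    move=> a; have := f_edge (x, a).
    by rewrite !inE eqxx => /imsetP [y _ ->]; exists y.
  exists x, g; apply/setP => -[[y a] w]; rewrite !inE /=.
  by case: eqP => //= ->; rewrite fg inE.
case=> x [g ->]; apply/existsP; exists (measurement x); rewrite imset_f //=.
apply/existsP; exists [ffun v : T => measurement (g v.2)]; apply/andP; split.
  by apply/forallP => v; rewrite ffunE imset_f ?implybT.
by apply/eqP/setP => -[[y a] w]; rewrite !inE ffunE /= inE.
Qed.

Lemma edges_AfromBP S : S \in edges_AfromB B B <-> exists y g, S = AfromB_edge y g.
Proof.
rewrite edges_AfromB_swap edges_AtoBP; split=> -[y [g eqS]]; exists y, g.
  apply/setP => v; have := congr1 (fun X : {set T * T} => (v.2, v.1) \in X) eqS.
  by rewrite !inE /= -surjective_pairing.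
by apply/setP => v; rewrite eqS !inE.
Qed.

Lemma AtoB_edge_in x g : AtoB_edge x g \in hedges (fr_prod B B).
Proof. by rewrite inE; apply/orP; left; apply/edges_AtoBP; exists x, g. Qed.

Lemma AfromB_edge_in y g : AfromB_edge y g \in hedges (fr_prod B B).
Proof. by rewrite inE; apply/orP; right; apply/edges_AfromBP; exists y, g. Qed.

Lemma sum_AtoB_edge (R : nmodType) x g (F : T * T -> R) :
  \sum_(v in AtoB_edge x g) F v = \sum_a \sum_b F ((x, a), (g a, b)).
Proof.
transitivity (\sum_(u : T | u.1 == x) \sum_(w : T | w.1 == g u.2) F (u, w)).
  by rewrite pair_big_dep /=; apply: eq_big => [v | [? ?] _]; rewrite ?inE.
by rewrite sum_measurement; apply: eq_bigr => a _; rewrite sum_measurement.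
Qed.

Lemma sum_AfromB_edge (R : nmodType) y g (F : T * T -> R) :
  \sum_(v in AfromB_edge y g) F v = \sum_b \sum_a F ((g b, a), (y, b)).
Proof.
rewrite (reindex_inj (h := fun v : T * T => (v.2, v.1))); last by move=> [? ?] [? ?] [-> ->].
rewrite -(sum_AtoB_edge y g (fun v => F (v.2, v.1))).
by apply: eq_bigl => v; rewrite !inE.
Qed.

Section NoSignalling.
Variables (R : pzRingType) (P : T * T -> R).
Hypothesis P_edge : forall S, S \in hedges (fr_prod B B) -> \sum_(v in S) P v = 1.

Lemma no_signalling_l x a y y' :
  \sum_b P ((x, a), (y, b)) = \sum_b P ((x, a), (y', b)).
Proof.
apply: (@sum_choice_constant _ _ _ (fun a y => \sum_b P ((x, a), (y, b))) 1) => g.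
by rewrite -sum_AtoB_edge P_edge ?AtoB_edge_in.
Qed.

Lemma no_signalling_r y b x x' :
  \sum_a P ((x, a), (y, b)) = \sum_a P ((x', a), (y, b)).
Proof.
apply: (@sum_choice_constant _ _ _ (fun b x => \sum_a P ((x, a), (y, b))) 1) => g.
by rewrite -sum_AfromB_edge P_edge ?AfromB_edge_in.
Qed.

End NoSignalling.
End BellScenario.

Arguments measurement {m d}.

Section Construction.
Variables (V : finType) (E : {set {set V}}) (m d : nat).
Variables (edge : 'I_m -> {set V}) (label : 'I_m -> V -> 'I_d) (edge_of : V -> 'I_m).
Hypothesis edge_in : forall x, edge x \in E.
Hypothesis edge_onto : forall e, e \in E -> exists x, e = edge x.
Hypothesis mem_edge_of : forall u, u \in edge (edge_of u).
Hypothesis label_inj : forall x, {in edge x &, injective (label x)}.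

Local Notation T := ('I_m * 'I_d)%type.
Local Notation B := (Bscen m d).

Definition vertex_of x a : option V := [pick u in edge x | label x u == a].

Lemma vertex_ofP x a u : vertex_of x a = Some u -> u \in edge x /\ label x u = a.
Proof. by rewrite /vertex_of; case: pickP => // w /andP [w_x /eqP <-] [<-]. Qed.

Lemma vertex_of_label x u : u \in edge x -> vertex_of x (label x u) = Some u.
Proof.
move=> u_x; rewrite /vertex_of; case: pickP => [w /andP [w_x /eqP]|].
  by move/(label_inj w_x u_x) ->.
by move/(_ u); rewrite u_x eqxx.
Qed.

Definition compatible (z : T * T) : bool :=
  if (vertex_of z.1.1 z.1.2, vertex_of z.2.1 z.2.2) is (Some u, Some w) then
    (u \in edge z.2.1) || (w \in edge z.1.1) ==> (u == w)
  else false.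

Definition rule (q : {set T * T}) : {set T * T} := q :&: [set z | compatible z].

Lemma rule_is_rule : is_rule B B rule.
Proof. by move=> q _; apply: subsetIl. Qed.

Lemma mem_rule_support z : (z \in rule_support B B rule) = compatible z.
Proof.
apply/bigcupP/idP => [[q _] | z_comp]; first by rewrite !inE => /andP [].
exists (setX (measurement z.1.1) (measurement z.2.1)); last by rewrite !inE !eqxx.
by apply/imset2P; exists (measurement z.1.1) (measurement z.2.1);
  rewrite // Bscen_edges imset_f.
Qed.

Definition embed (u : V) : T * T :=
  let a := (edge_of u, label (edge_of u) u) in (a, a).

Lemma compatible_embed u : compatible (embed u).
Proof. by rewrite /compatible /= vertex_of_label // eqxx implybT. Qed.

Lemma embed_inj : injective embed.
Proof.
move=> u w [eq_edge eq_label _ _]; move: eq_label; rewrite eq_edge.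
by apply: label_inj; [rewrite -eq_edge |]; apply: mem_edge_of.
Qed.

Lemma sum_labels (R : nmodType) x (Q : 'I_d -> R) :
  (forall a, vertex_of x a = None -> Q a = 0) ->
  \sum_a Q a = \sum_(u in edge x) Q (label x u).
Proof.
move=> Q0; rewrite -(big_imset _ (@label_inj x)) /=.
rewrite [LHS](bigID (mem (label x @: edge x))) /= [X in _ + X]big1 ?addr0 //.
move=> a a_out; apply: Q0; case vx: (vertex_of x a) => [u|//].
by have [u_x la] := vertex_ofP vx; rewrite -la imset_f in a_out.
Qed.

Lemma sum_game_edge (R : nmodType) (F : T * T -> R) S :
  (forall z, ~~ compatible z -> F z = 0) ->
  \sum_(v in S :&: rule_support B B rule) F v = \sum_(v in S) F v.
Proof.
move=> F0; rewrite big_mkcond [RHS]big_mkcond; apply: eq_bigr => v _.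
rewrite inE mem_rule_support; case: (v \in S) => //=.
by case: (boolP (compatible v)) => // /F0 ->.
Qed.

Section Restriction.
Variables (R : pzRingType) (P : T * T -> R).
Hypothesis P_incompatible : forall z, ~~ compatible z -> P z = 0.
Hypothesis P_edge : forall S, S \in hedges (fr_prod B B) -> \sum_(v in S) P v = 1.

Lemma marginal_l_shared x y u : u \in edge x -> u \in edge y ->
  \sum_b P ((x, label x u), (y, b)) = P ((x, label x u), (y, label y u)).
Proof.
move=> u_x u_y; rewrite (bigD1 (label y u)) //= big1 ?addr0 // => b b_ne.
apply: P_incompatible; rewrite /compatible /= vertex_of_label //.
case vy: (vertex_of y b) => [w|//]; have [_ lw] := vertex_ofP vy.
by rewrite u_y /=; apply: contra b_ne => /eqP uw; rewrite -lw -uw.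
Qed.

Lemma marginal_r_shared x y u : u \in edge x -> u \in edge y ->
  \sum_a P ((x, a), (y, label y u)) = P ((x, label x u), (y, label y u)).
Proof.
move=> u_x u_y; rewrite (bigD1 (label x u)) //= big1 ?addr0 // => a a_ne.
apply: P_incompatible; rewrite /compatible /= (vertex_of_label u_y).
case vx: (vertex_of x a) => [w|//]; have [_ lw] := vertex_ofP vx.
by rewrite u_x orbT /=; apply: contra a_ne => /eqP wu; rewrite -lw wu.
Qed.

(* No-signalling moves one player at a time from edge [x] to edge [y]. *)
Lemma diagonal_edge_indep x y u : u \in edge x -> u \in edge y ->
  P ((x, label x u), (x, label x u)) = P ((y, label y u), (y, label y u)).
Proof.
move=> u_x u_y.
rewrite -(marginal_l_shared u_x u_x) (no_signalling_l P_edge _ _ x y).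
rewrite (marginal_l_shared u_x u_y) -(marginal_r_shared u_x u_y).
by rewrite (no_signalling_r P_edge _ _ x y) (marginal_r_shared u_y u_y).
Qed.

Lemma sum_embed_edge e : e \in E -> \sum_(u in e) P (embed u) = 1.
Proof.
case/edge_onto=> x ->.
transitivity (\sum_(u in edge x) P ((x, label x u), (x, label x u))).
  by apply: eq_bigr => u u_x; rewrite (diagonal_edge_indep (mem_edge_of u) u_x).
rewrite -(sum_labels (Q := fun a => P ((x, a), (x, a)))); last first.
  by move=> a vx; apply: P_incompatible; rewrite /compatible /= vx.
rewrite -(P_edge (AtoB_edge_in x (fun=> x))) sum_AtoB_edge; apply: eq_bigr => a _.
case vx: (vertex_of x a) => [u|].
  by have [u_x <-] := vertex_ofP vx; rewrite marginal_l_shared.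
have incompatible_a b : ~~ compatible ((x, a), (x, b)) by rewrite /compatible /= vx.
by rewrite P_incompatible // big1 // => b _; apply: P_incompatible.
Qed.

End Restriction.

Lemma restrict_game_model (R : realType) (p : T * T -> R) :
  prob_model (game B B rule) p -> prob_model (Hypergraph [set: V] E) (p \o embed).
Proof.
move=> [p_bound p_edge]; split=> [u _ | e e_E].
  by apply: p_bound; rewrite /= mem_rule_support compatible_embed.
pose P z := if compatible z then p z else 0.
have P_incompatible z : ~~ compatible z -> P z = 0 by rewrite /P => /negbTE ->.
rewrite -(sum_embed_edge P_incompatible _ e_E); last first.
  move=> S S_edge; rewrite -(sum_game_edge _ P_incompatible).
  rewrite -(p_edge _ (imset_f _ S_edge)).
  by apply: eq_bigr => v; rewrite inE mem_rule_support /P => /andP [_ ->].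
by apply: eq_bigr => u _; rewrite /P compatible_embed.
Qed.

Section Extension.
Variables (R : realType) (p : V -> R).
Hypothesis p_bound : forall u, 0 <= p u <= 1.
Hypothesis p_edge : forall e, e \in E -> \sum_(u in e) p u = 1.

Definition outer_weight x y := \sum_(t in edge x :\: edge y) p t.

Definition outcome_weight x a := if vertex_of x a is Some u then p u else 0.

Definition joint (z : T * T) : R :=
  if (vertex_of z.1.1 z.1.2, vertex_of z.2.1 z.2.2) is (Some u, Some w) then
    if (u \in edge z.2.1) || (w \in edge z.1.1) then (u == w)%:R * p u
    else p u * p w / outer_weight z.1.1 z.2.1
  else 0.

Lemma p_ge0 u : 0 <= p u.
Proof. by case/andP: (p_bound u). Qed.

Lemma outer_weight_ge0 x y : 0 <= outer_weight x y.
Proof. by apply: sumr_ge0 => t _; apply: p_ge0. Qed.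

Lemma outer_weight_sym x y : outer_weight x y = outer_weight y x.
Proof.
have split z w :
  \sum_(t in edge z) p t = \sum_(t in edge z :&: edge w) p t + outer_weight z w.
  exact: big_setID.
apply: (addrI (\sum_(t in edge x :&: edge y) p t)).
by rewrite -split setIC -split !p_edge.
Qed.

Lemma joint_incompatible z : ~~ compatible z -> joint z = 0.
Proof.
rewrite /compatible /joint; case: (vertex_of _ _) => [u|//]; case: (vertex_of _ _) => [w|//].
by case: (_ || _) => //= /negbTE ->; rewrite mul0r.
Qed.

Lemma joint_ge0 z : 0 <= joint z.
Proof.
rewrite /joint; case: (vertex_of _ _) => [u|//]; case: (vertex_of _ _) => [w|//].
case: (_ || _); first by rewrite mulr_ge0 ?ler0n ?p_ge0.
by rewrite divr_ge0 ?mulr_ge0 ?p_ge0 ?outer_weight_ge0.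
Qed.

Lemma joint_swap x a y b : joint ((y, b), (x, a)) = joint ((x, a), (y, b)).
Proof.
rewrite /joint /=; case: (vertex_of x a) => [u|]; case: (vertex_of y b) => [w|] //.
rewrite orbC; case: (_ || _); first by rewrite eq_sym; case: eqP => [-> | _]; rewrite ?mul0r.
by rewrite outer_weight_sym [p w * p u]mulrC.
Qed.

(* If [u] lies outside [edge y] and [outer_weight x y = 0] then [p u = 0], so the
   junk value [_ / 0 = 0] in [joint] is harmless. *)
Lemma marginal_joint_vertex x u y : u \in edge x ->
  \sum_b joint ((x, label x u), (y, b)) = p u.
Proof.
move=> u_x; have [u_y | u_ny] := boolP (u \in edge y).
  rewrite (bigD1 (label y u)) //= big1 ?addr0.
    by rewrite /joint /= !vertex_of_label // u_y eqxx mul1r.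
  move=> b b_ne; rewrite /joint /= vertex_of_label //.
  case vy: (vertex_of y b) => [w|//]; have [_ lw] := vertex_ofP vy.
  rewrite u_y /=; case: eqP => [uw | _]; last by rewrite mul0r.
  by rewrite -lw -uw eqxx in b_ne.
rewrite (sum_labels (x := y)); last first.
  by move=> b vy; rewrite /joint /= vy; case: (vertex_of x _).
transitivity (\sum_(w in edge y :\: edge x) p w * (p u / outer_weight y x)).
  rewrite [RHS]big_mkcond [LHS]big_mkcond; apply: eq_bigr => w _.
  rewrite inE; case w_y: (w \in edge y); rewrite ?andbF //= andbT.
  rewrite /joint /= !vertex_of_label // (negbTE u_ny) /= outer_weight_sym.
  case: (boolP (w \in edge x)) => /= [w_x | _]; last by rewrite mulrCA mulrA.
  by case: eqP => [uw | _]; [rewrite uw w_y in u_ny | rewrite mul0r].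
rewrite -mulr_suml mulrCA.
have [w0 | w_ne0] := eqVneq (outer_weight y x) 0; last by rewrite divff ?mulr1.
suff -> : p u = 0 by rewrite mul0r.
apply/eqP; rewrite eq_le p_ge0 andbT -w0 outer_weight_sym /outer_weight.
by rewrite (bigD1 u) ?inE ?u_ny ?u_x //= lerDl sumr_ge0 // => t _; apply: p_ge0.
Qed.

Lemma marginal_joint_l x a y : \sum_b joint ((x, a), (y, b)) = outcome_weight x a.
Proof.
rewrite /outcome_weight; case vx: (vertex_of x a) => [u|].
  by have [u_x <-] := vertex_ofP vx; apply: marginal_joint_vertex.
by rewrite big1 // => b _; rewrite /joint /= vx.
Qed.

Lemma marginal_joint_r x y b : \sum_a joint ((x, a), (y, b)) = outcome_weight y b.
Proof. by rewrite -(marginal_joint_l y b x); apply: eq_bigr => a _; rewrite joint_swap. Qed.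

Lemma sum_outcome_weight x : \sum_a outcome_weight x a = 1.
Proof.
rewrite (sum_labels (x := x)) => [|a vx]; last by rewrite /outcome_weight vx.
rewrite -(p_edge (edge_in x)).
by apply: eq_bigr => u u_x; rewrite /outcome_weight vertex_of_label.
Qed.

Lemma outcome_weight_le1 x a : outcome_weight x a <= 1.
Proof. by rewrite /outcome_weight; case: vertex_of => [u|//]; case/andP: (p_bound u). Qed.

Lemma joint_le1 z : joint z <= 1.
Proof.
case: z => [[x a] [y b]]; have := marginal_joint_l x a y; rewrite (bigD1 b) //= => sum_xa.
have := outcome_weight_le1 x a.
have : 0 <= \sum_(i < d | i != b) joint ((x, a), (y, i)).
  by apply: sumr_ge0 => i _; apply: joint_ge0.
lra.
Qed.

Lemma extend_model : prob_model (game B B rule) joint /\ {in [set: V], joint \o embed =1 p}.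
Proof.
split; last by move=> u _ /=; rewrite /joint /= vertex_of_label // mem_edge_of eqxx mul1r.
split=> [v _ | _ /imsetP [S S_edge ->]]; first by rewrite joint_ge0 joint_le1.
rewrite sum_game_edge; last exact: joint_incompatible.
move: S_edge; rewrite inE => /orP [/edges_AtoBP [x [g ->]] | /edges_AfromBP [y [g ->]]].
  rewrite sum_AtoB_edge -(sum_outcome_weight x).
  by apply: eq_bigr => a _; rewrite marginal_joint_l.
rewrite sum_AfromB_edge -(sum_outcome_weight y).
by apply: eq_bigr => b _; rewrite marginal_joint_r.
Qed.

End Extension.

Lemma game_cond_scenario (R : realType) :
  cond_scenario R (Hypergraph [set: V] E) (game B B rule).
Proof.
exists embed; split.
- by move=> u w _ _; apply: embed_inj.
- by move=> u _; rewrite /= mem_rule_support compatible_embed.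
- exact: restrict_game_model.
- move=> p [p_bound p_edge]; exists (joint p).
  by apply: extend_model => // u; apply: p_bound; rewrite inE.
Qed.

End Construction.

Local Close Scope ring_scope.

(* [d_gt0] only provides a default label; it holds whenever [T] is inhabited. *)
Definition index_label (T : finType) (A : {set T}) d (d_gt0 : T -> 0 < d) (u : T) : 'I_d :=
  insubd (Ordinal (d_gt0 u)) (index u (enum A)).

Lemma index_label_inj (T : finType) (A : {set T}) d (d_gt0 : T -> 0 < d) :
  #|A| <= d -> {in A &, injective (index_label A d_gt0)}.
Proof.
move=> card_le u w uA wA /(congr1 val); rewrite !val_insubd.
have index_lt t : t \in A -> index t (enum A) < d.
  by move=> tA; rewrite (leq_trans _ card_le) // cardE index_mem mem_enum.
by rewrite !index_lt //; apply: index_inj; rewrite ?mem_enum.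
Qed.

Theorem theorem4p1 (R : realType) (V : finType) (E : {set {set V}}) :
  cover E = [set: V] ->
  exists r : {set (('I_#|E| * 'I_(\max_(e in E) #|e|)) *
                   ('I_#|E| * 'I_(\max_(e in E) #|e|)))%type} ->
             {set (('I_#|E| * 'I_(\max_(e in E) #|e|)) *
                   ('I_#|E| * 'I_(\max_(e in E) #|e|)))%type},
    is_rule (Bscen #|E| (\max_(e in E) #|e|)) (Bscen #|E| (\max_(e in E) #|e|)) r /\
    cond_scenario R (Hypergraph [set: V] E)
      (game (Bscen #|E| (\max_(e in E) #|e|)) (Bscen #|E| (\max_(e in E) #|e|)) r).
Proof.
move=> coverE; set d := \max_(e in E) #|e|.
have in_cover u : exists2 e, e \in E & u \in e.
  by apply/bigcupP; rewrite -/(cover E) coverE inE.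
have card_le e : e \in E -> #|e| <= d by exact: leq_bigmax_cond.
have d_gt0 (u : V) : 0 < d.
  by have [e eE ue] := in_cover u; apply: leq_trans (card_le e eE); apply/card_gt0P; exists u.
have m_gt0 (u : V) : 0 < #|E| by have [e eE _] := in_cover u; apply/card_gt0P; exists e.
pose edge (x : 'I_#|E|) := enum_val x.
pose edge_of u := odflt (Ordinal (m_gt0 u)) [pick x | u \in edge x].
have edge_onto e : e \in E -> exists x, e = edge x.
  by move=> eE; exists (enum_rank_in eE e); rewrite /edge enum_rankK_in.
have mem_edge_of u : u \in edge (edge_of u).
  rewrite /edge_of; case: pickP => // none; have [e eE ue] := in_cover u.
  by have [x ex] := edge_onto e eE; move: (none x); rewrite -ex ue.
exists (rule edge (fun x => index_label (edge x) d_gt0)); split; first exact: rule_is_rule.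
apply: (game_cond_scenario _ edge_onto mem_edge_of) => x; first exact: enum_valP.
exact/index_label_inj/card_le/enum_valP.
Qed.
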